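(* Consider the recursive multi-rooted algorithm $\mathrm{DST}(I,\widetilde{\mathrm{opt}})$ described in the context, applied to a planar \textsc{Multi-Rooted Directed Steiner Tree} instance $I=(G=(V,E),c,\{r_1,\dots,r_R\},X)$ with positive integer edge costs. Let $\ell$ and $o$ be non-negative integers with $|X|\le 2^{\ell}$ and $\widetilde{\mathrm{opt}}\le 2^{o}$. If $\widetilde{\mathrm{opt}}\ge\mathrm{opt}$, where $\mathrm{opt}$ is the optimal value of $I$, then $\mathrm{DST}(I,\widetilde{\mathrm{opt}})$ returns a feasible solution of cost at most $(8(R+\ell)+1)\cdot\mathrm{opt}$, and the number of recursive calls is at most $|X|\cdot 2^{2\ell+o}$.
   Context: MR-DST: digraph $G=(V,E)$ (parallel edges allowed, planar underlying undirected graph) with positive integer costs $c_e$, roots $r_1,\dots,r_R$, terminals $X\subseteq V\setminus\{r_1,\dots,r_R\}$; feasible $F\subseteq E$: every terminal reachable from some root via $F$; cost $\sum_{e\in F}c_e$; $\mathrm{opt}$ the minimum cost. $d(\{r_1,\dots,r_R\},v)=\min_j d(r_j,v)$ (shortest-path distances). $A_1,\dots,A_R$: vertex-disjoint shortest-path arborescences rooted at $r_1,\dots,r_R$ such that for $v\in V(A_i)$ the $r_i$–$v$ path in $A_i$ has cost $d(\{r_1,\dots,r_R\},v)$ (obtained from a shortest-path arborescence from an auxiliary vertex joined to all roots by zero-cost edges). A multi-rooted partial arborescence is $T=F\cup\bigcup_j T_{j}$ with $T_j$ vertex-disjoint partial arborescences (directed trees oriented away from their root) rooted at roots $r_j$,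 $F$ a set of edges not in any $T_j$ with endpoints in $\bigcup_j V(T_j)$, $T$ weakly connected and acyclic in the undirected sense. Induced subinstances for components $C_1,\dots,C_h$ of $G\setminus T$: contract $T$ into a new vertex $r_T$ (edges inherit costs), $I_{C_i}=(G_{\mathrm{contract}}[C_i\cup\{r_T\}],c,\{r_T\}\cup(\text{roots in }C_i),C_i\cap X)$. Algorithm $\mathrm{DST}(I,\widetilde{\mathrm{opt}})$: (1) if $\widetilde{\mathrm{opt}}<1$ or $d(\{r_1,\dots,r_R\},t)>\widetilde{\mathrm{opt}}$ for some $t\in X$, return infeasible; (2) else if $|X|=1$, return a shortest directed path from the root set to the terminal; (3) otherwise let $\mathcal F_1=\mathrm{DST}(I,\widetilde{\mathrm{opt}}/2)$ (cost $\infty$ if infeasible); remove all vertices $v$ with $d(\{r_1,\dots,r_R\},v)>\widetilde{\mathrm{opt}}$; compute a multi-rooted partial arborescence $T=F\cup\bigcup_{j=1}^R T_j$ in which each $T_j$ is empty or a subtree of $A_j$ rooted at $r_j$ that is the union of up to four shortest directed paths starting at $r_j$, and such that each weakly connected component $C_i$ of $G\setminus T$ contains at most $|X|/2$ terminals; let $\mathcal F'_i=\mathrm{DST}(I_{C_i},\widetilde{\mathrm{opt}})$ and $\mathcal F_2$ the edges of $G$ corresponding to $(E(T)\setminus F)\cup\bigcup_i\mathcal F'_i$ (cost $\infty$ if some $\mathcal F'_i$ is infeasible); return infeasible if both costs are $\infty$, else the cheaper of $\mathcal F_1,\mathcal F_2$. *)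

From HB Require Import structures.
From mathcomp Require Import all_boot all_order all_algebra.
From Stdlib Require Reals.

Set Implicit Arguments.
Unset Strict Implicit.
Unset Printing Implicit Defensive.

Import Order.TTheory GRing.Theory Num.Theory.
Local Open Scope ring_scope.

(* An instance of Multi-Rooted Directed Steiner Tree: a directed       *)
(* multigraph (parallel edges/loops allowed) given by an edge type     *)
Record inst : Type := Inst {
  iV : finType;
  iE : finType;
  isrc : iE -> iV;
  idst : iE -> iV;
  icost : iE -> nat;
  iroots : {set iV};
  iterms : {set iV} }.

Section Graph.
Variable I : inst.

Fixpoint walk (u v : iV I) (p : seq (iE I)) : bool :=
  match p with
  | [::] => u == v
  | e :: p' => (isrc e == u) && walk (idst e) v p'
  end.

Fixpoint uwalk (u v : iV I) (p : seq (iE I)) : bool :=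
  match p with
  | [::] => u == v
  | e :: p' => ((isrc e == u) && uwalk (idst e) v p')
               || ((idst e == u) && uwalk (isrc e) v p')
  end.

Definition wcost (p : seq (iE I)) : nat := (\sum_(e <- p) icost e)%N.
Definition setcost (S : {set iE I}) : nat := (\sum_(e in S) icost e)%N.

Definition dist_le (S : {set iV I}) (v : iV I) (q : rat) : Prop :=
  exists u p, [/\ u \in S, walk u v p & (wcost p)%:R <= q].

Definition is_dist (S : {set iV I}) (v : iV I) (d : nat) : Prop :=
  (exists u p, [/\ u \in S, walk u v p & wcost p = d]) /\
  (forall u p, u \in S -> walk u v p -> (d <= wcost p)%N).

Definition feasible (F : {set iE I}) : Prop :=
  forall t, t \in iterms I ->
    exists r p, [/\ r \in iroots I, walk r t p & all (fun e => e \in F) p].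

Definition is_opt (k : nat) : Prop :=
  (exists F, feasible F /\ setcost F = k) /\
  (forall F, feasible F -> (k <= setcost F)%N).

Definition endpoints (S : {set iE I}) : {set iV I} :=
  [set isrc e | e in S] :|: [set idst e | e in S].

Definition erel (ET : {set iE I}) : rel (iV I) := fun u v =>
  [exists e in ET, ((isrc e == u) && (idst e == v)) || ((isrc e == v) && (idst e == u))].

Definition wrel (W : {set iV I}) : rel (iV I) := fun u v =>
  [&& u \in W, v \in W &
   [exists e : iE I, ((isrc e == u) && (idst e == v)) || ((isrc e == v) && (idst e == u))]].

Definition comps (W : {set iV I}) : {set {set iV I}} :=
  [set [set v in W | connect (wrel W) u v] | u in W].

Definition arborescence (r : iV I) (S : {set iE I}) : Prop :=
  [/\ forall e, e \in S -> idst e != r,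
      forall v, v \in endpoints S -> v != r -> #|[set e in S | idst e == v]| = 1%N
    & forall v, v \in r |: endpoints S ->
        (exists p, walk r v p && all (fun e => e \in S) p)].

Definition avert (A : iV I -> {set iE I}) (r : iV I) : {set iV I} :=
  r |: endpoints (A r).

Definition spt_family (P : {set iV I}) (A : iV I -> {set iE I}) : Prop :=
  [/\ forall r, r \notin iroots I -> A r = set0,
      forall r e, e \in A r -> isrc e \in P /\ idst e \in P,
      (forall r r', r \in iroots I -> r' \in iroots I -> r != r' ->
        [disjoint avert A r & avert A r']) /\
      forall r, r \in iroots I -> arborescence r (A r),
      forall r v p, r \in iroots I -> walk r v p ->
        all (fun e => e \in A r) p -> is_dist (iroots I) v (wcost p)
    & forall v, v \in P -> exists2 r, r \in iroots I & v \in avert A r].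

(* T_j given as an option: None = empty, Some S = partial arborescence
   with edge set S and vertex set {r_j} U endpoints S. *)
Definition tvert (Tj : iV I -> option {set iE I}) : {set iV I} :=
  \bigcup_(r in iroots I) (if Tj r is Some ES then r |: endpoints ES else set0).

Definition tedges (Tj : iV I -> option {set iE I}) : {set iE I} :=
  \bigcup_(r in iroots I) odflt set0 (Tj r).

(* T = F U (U_j T_j) is a multi-rooted partial arborescence of the
   required form *)
Definition valid_T (A : iV I -> {set iE I}) (Tj : iV I -> option {set iE I})
    (F : {set iE I}) : Prop :=
  [/\ forall r, r \notin iroots I -> Tj r = None,
      forall r S, Tj r = Some S ->
        exists ps : seq (seq (iE I)),
          [/\ (size ps <= 4)%N,
              forall p, p \in ps ->
                (exists v, walk r v p && all (fun e => e \in A r) p)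
            & S = \bigcup_(p <- ps) [set e in p]],
      (forall r r' S S', r != r' -> Tj r = Some S -> Tj r' = Some S' ->
        [disjoint r |: endpoints S & r' |: endpoints S']) /\
      forall e, e \in F ->
        [/\ e \notin tedges Tj, isrc e \in tvert Tj & idst e \in tvert Tj],
      forall u v, u \in tvert Tj -> v \in tvert Tj ->
        connect (erel (tedges Tj :|: F)) u v
    &
      forall u p, uwalk u u p -> uniq p ->
        all (fun e => e \in tedges Tj :|: F) p -> p = [::]].

(* the cheaper of two (possibly infeasible = None = cost infinity)
   solutions; None if both are infeasible *)
Definition cheaper (a b r : option {set iE I}) : Prop :=
  match a, b with
  | None, None => r = None
  | Some _, None => r = a
  | None, Some _ => r = b
  | Some x, Some y => (r = a /\ (setcost x <= setcost y)%N)
                      \/ (r = b /\ (setcost y <= setcost x)%N)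
  end.

Definition fail_cond (q : rat) : Prop :=
  q < 1 \/ exists t, t \in iterms I /\ ~ dist_le (iroots I) t q.

End Graph.

(* Induced subinstance I_C: contract T (vertex set VT) into r_T and    *)
(* restrict to C U {r_T}.  Vertices: None = r_T, Some v = v in C.      *)
(* Edges: edges of G with both ends in C U VT and at least one in C    *)
(* (edges inside T become loops at r_T and are dropped).               *)
Definition keep (I : inst) (VT C : {set iV I}) (e : iE I) : bool :=
  [&& (isrc e \in C) || (idst e \in C), isrc e \in C :|: VT & idst e \in C :|: VT].

Definition subV (I : inst) (C : {set iV I}) : finType :=
  option {v : iV I | v \in C}.

Definition subE (I : inst) (VT C : {set iV I}) : finType :=
  {e : iE I | keep VT C e}.

Definition subinst (I : inst) (VT C : {set iV I}) : inst :=
  @Inst (subV C) (subE VT C)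
    (fun e => insub (isrc (val e)))
    (fun e => insub (idst (val e)))
    (fun e => icost (val e))
    [set x : subV C | if x is Some v then val v \in iroots I else true]
    [set x : subV C | if x is Some v then val v \in iterms I else false].

Definition lift_set (I : inst) (VT C : {set iV I})
    (S : {set iE (subinst VT C)}) : {set iE I} :=
  [set val (e : subE VT C) | e in S].

(* Executions of DST(I, opt~): DST_run I q res calls means that some   *)
(* execution of DST on (I, q) (over all admissible choices of shortest *)
(* paths, arborescences A_j and separator T) returns res (None =       *)
(* "infeasible") and makes calls calls in total (the call itself      *)
(* included, i.e. the number of nodes of its recursion tree).          *)
Definition relevant (I : inst) (W C : {set iV I}) : bool :=
  (C \in comps W) && (C :&: iterms I != set0).

Unset Implicit Arguments.
Inductive DST_run : forall I : inst, rat -> option {set iE I} -> nat -> Prop :=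
| DST_fail (I : inst) (q : rat) :
    fail_cond I q -> DST_run I q None 1
| DST_single (I : inst) (q : rat) (t r : iV I) (p : seq (iE I)) :
    ~ fail_cond I q ->
    iterms I = [set t] ->
    r \in iroots I -> walk r t p -> is_dist (iroots I) t (wcost p) ->
    DST_run I q (Some [set e in p]) 1
| DST_split (I : inst) (q : rat) (r1 : option {set iE I}) (n1 : nat)
    (P : {set iV I}) (A : iV I -> {set iE I})
    (Tj : iV I -> option {set iE I}) (F : {set iE I})
    (sol : forall C : {set iV I}, option {set iE (subinst (tvert Tj) C)})
    (cnt : {set iV I} -> nat) (res : option {set iE I}) :
    ~ fail_cond I q ->
    #|iterms I| != 1%N ->
    DST_run I (q / 2) r1 n1 ->
    (forall v, v \in P <-> dist_le (iroots I) v q) ->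
    spt_family P A ->
    valid_T A Tj F ->
    tvert Tj \subset P ->
    (forall C, C \in comps (P :\: tvert Tj) ->
       (2 * #|C :&: iterms I| <= #|iterms I|)%N) ->
    (forall C, relevant (P :\: tvert Tj) C ->
       DST_run (subinst (tvert Tj) C) q (sol C) (cnt C)) ->
    cheaper r1
      (if [forall C, relevant (P :\: tvert Tj) C ==> isSome (sol C)]
       then Some (tedges Tj :|:
                  \bigcup_(C | relevant (P :\: tvert Tj) C)
                     lift_set (odflt set0 (sol C)))
       else None)
      res ->
    DST_run I q res
      (1 + n1 + \sum_(C | relevant (P :\: tvert Tj) C) cnt C)%N.

Set Implicit Arguments.

(* Planarity of the underlying undirected multigraph: existence of a   *)
(* drawing in R^2 with distinct vertex points and edges drawn as arcs   *)
(* (Jordan arcs, or closed Jordan curves for loops) meeting only at     *)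
(* common endpoints.                                                    *)
Definition planar (I : inst) : Prop :=
  let R := Reals.Rdefinitions.R in
  let in01 (t : R) := Reals.Rdefinitions.Rle Reals.Rdefinitions.R0 t /\
                      Reals.Rdefinitions.Rle t Reals.Rdefinitions.R1 in
  let endpt (t : R) := t = Reals.Rdefinitions.R0 \/ t = Reals.Rdefinitions.R1 in
  exists (pos : iV I -> R * R) (arc : iE I -> R -> R * R),
    [/\ injective pos,
        forall e t, Reals.Ranalysis1.continuity_pt (fun s => fst (arc e s)) t /\
                    Reals.Ranalysis1.continuity_pt (fun s => snd (arc e s)) t,
        (forall e, arc e Reals.Rdefinitions.R0 = pos (isrc e) /\
                  arc e Reals.Rdefinitions.R1 = pos (idst e)) /\
        forall e s t, in01 s -> in01 t -> Reals.Rdefinitions.Rlt s t ->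
          arc e s = arc e t -> s = Reals.Rdefinitions.R0 /\ t = Reals.Rdefinitions.R1,
        forall e t v, in01 t -> arc e t = pos v -> endpt t
      & forall e e' s t, e != e' -> in01 s -> in01 t -> arc e s = arc e' t ->
          endpt s /\ endpt t].

(* The cost bound
   is proved against an arbitrary feasible solution F0 of cost at most opt~
   rather than an optimal one, because what the induction hypothesis receives
   in a subinstance I_C is the part of F0 inside it, which is feasible there
   but need not be optimal.
   Step (1) never fires: cost(F0) >= 1 and every terminal is within distance
   cost(F0) of a root.  If opt~ >= 2 cost(F0), the call with opt~/2 already
   meets the bound.  Otherwise every vertex surviving the pruning is at
   distance < 2 cost(F0) from the roots, so each T_j, a union of at most four
   shortest paths, costs at most 8 cost(F0).  Distinct components keep
   disjoint parts of F0, and I_C has at most |X|/2 <= 2^(l-1) terminals and,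
   if T meets k roots, at most R - k + 1 roots; summing,
   8k + (8(R - k + l) + 1) <= 8(R + l) + 1.  Feasibility holds because every
   vertex of T is reachable from a root inside T, which is where r_T stands
   in each I_C.  For the number of calls, the call with opt~/2 and the calls
   on the components each account for at most |X| 2^(2l+o-2) nodes. *)
From HB Require Import structures.
From mathcomp Require Import all_boot all_order all_algebra.
From mathcomp Require Import lra zify.
From Stdlib Require Import Classical.

Set Implicit Arguments.
Unset Strict Implicit.
Unset Printing Implicit Defensive.
Import Order.TTheory GRing.Theory Num.Theory.
Local Open Scope ring_scope.

Lemma sum_bool_card (T : finType) (P Q : pred T) :
  (\sum_(x | P x) Q x = #|[pred x | P x && Q x]|)%N.
Proof. by rewrite -sum1_card big_mkcondr /=; apply: eq_bigr => x _; case: (Q x). Qed.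

Lemma leq_sum_disjoint (J T : finType) (P : pred J) (S : J -> {set T})
    (X : {set T}) (w : T -> nat) :
  (forall j j' t, P j -> P j' -> t \in S j -> t \in S j' -> j = j') ->
  (\sum_(j | P j) \sum_(t in S j :&: X) w t <= \sum_(t in X) w t)%N.
Proof.
move=> Sdisj.
have sumSX j : (\sum_(t in S j :&: X) w t = \sum_(t in X) (t \in S j) * w t)%N.
  rewrite big_mkcond [RHS]big_mkcond; apply: eq_bigr => t _.
  by rewrite inE; case: (t \in S j); case: (t \in X); rewrite ?mul1n ?mul0n.
under eq_bigr do rewrite sumSX.
rewrite exchange_big /=; apply: leq_sum => t _.
rewrite -big_distrl /= -{2}(mul1n (w t)) leq_mul2r sum_bool_card; apply/orP; right.
by apply/card_le1_eqP => j j' /andP[Pj tj] /andP[Pj' tj']; exact: Sdisj Pj' Pj tj' tj.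
Qed.

Lemma leq_sum_seq_bound (J : eqType) (r : seq J) (f : J -> nat) b :
  (forall j, j \in r -> f j <= b)%N -> (\sum_(j <- r) f j <= size r * b)%N.
Proof.
move=> le_fb; apply: (@leq_trans (\sum_(j <- r) b)).
  by rewrite big_seq [X in (_ <= X)%N]big_seq; apply: leq_sum.
by rewrite big_const_seq count_predT iter_addn_0 mulnC.
Qed.

Lemma in_bigcup_seq (T : finType) (J : Type) (r : seq J) (F : J -> {set T}) x :
  (x \in \big[@setU _/set0]_(j <- r) F j) = has (fun j => x \in F j) r.
Proof. by elim: r => [|j r IH]; rewrite ?big_nil ?big_cons ?inE //= IH. Qed.

Lemma leq_half_pow2 m n l : (2 * m <= n)%N -> (n <= 2 ^ l.+1)%N -> (m <= 2 ^ l)%N.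
Proof. by rewrite expnS => le_mn le_n; rewrite -(@leq_pmul2l 2) // (leq_trans le_mn). Qed.

Lemma card_le_pow2_succ (T : finType) (A : {set T}) l :
  A != set0 -> #|A| != 1%N -> (#|A| <= 2 ^ l)%N -> exists l', l = l'.+1.
Proof.
rewrite -card_gt0; case: l => [|l]; last by exists l.
by rewrite expn0; case: #|A| => [|[|]].
Qed.

Section Walks.
Variable I : inst.
Implicit Types (u v : iV I) (p : seq (iE I)) (F : {set iE I}).

Definition wlast u p := last u [seq idst e | e <- p].

Lemma walk_cat u v p1 p2 :
  walk u v (p1 ++ p2) = walk u (wlast u p1) p1 && walk (wlast u p1) v p2.
Proof. by elim: p1 u => [|e p1 IH] u /=; rewrite ?eqxx // IH andbA. Qed.

Lemma walk_wlast u v p : walk u v p -> wlast u p = v.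
Proof. by elim: p u => [|e p IH] u /=; [move/eqP | case/andP => _ /IH]. Qed.

Lemma walk_rcons u p e : walk u (isrc e) p -> walk u (idst e) (rcons p e).
Proof. by move=> w; rewrite -cats1 walk_cat (walk_wlast w) w /= !eqxx. Qed.

Lemma walk_prefix u v p e : walk u v p -> e \in p ->
  exists2 p1, walk u (isrc e) p1 & {subset rcons p1 e <= p}.
Proof.
move=> w ep; case/splitPr: ep w => p1 p2; rewrite walk_cat /= => /and3P[w1 /eqP src _].
exists p1; first by rewrite src.
by move=> x; rewrite mem_rcons mem_cat !in_cons => /orP[->|->]; rewrite ?orbT.
Qed.

Lemma walk_shorten u v p : walk u v p ->
  exists p', [/\ walk u v p', uniq p' & {subset p' <= p}].
Proof.
elim: p u => [|e p IH] u /=; first by move=> w; exists [::].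
case/andP=> /eqP src /IH[p' [w' uniq_p' sub']].
have sub_cons s : {subset s <= p'} -> {subset e :: s <= e :: p}.
  by move=> ss x; rewrite !in_cons => /orP[->|/ss/sub'->]; rewrite ?orbT.
case: (boolP (e \in p')) => [e_p'|e_n_p'].
  case/splitPr: e_p' w' uniq_p' sub' sub_cons => p1 p2.
  rewrite walk_cat cat_uniq /= => /andP[_ /andP[_ w2]] /and4P[_ _ e_p2 uniq_p2] _ sc.
  exists (e :: p2); split; first by rewrite /= src eqxx.
    by rewrite /= e_p2.
  by apply: sc => x x_p2; rewrite mem_cat in_cons x_p2 !orbT.
by exists (e :: p'); split; rewrite /= ?src ?eqxx ?e_n_p' //; exact: sub_cons.
Qed.

Lemma walk_target u v p : walk u v p -> v = u \/ exists2 e, e \in p & idst e = v.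
Proof.
elim: p u => [|e p IH] u /=; first by move/eqP; left.
case/andP=> _ /IH[->|[e' e'p <-]]; right; first by exists e; rewrite ?mem_head.
by exists e'; rewrite // in_cons e'p orbT.
Qed.

Lemma is_dist_le (S : {set iV I}) v d q :
  is_dist S v d -> dist_le S v q -> d%:R <= q.
Proof. by move=> [_ min] [u [p [uS w cp]]]; apply: le_trans cp; rewrite ler_nat (min u p). Qed.

Definition reachable (FS : {set iE I}) u :=
  exists r p, [/\ r \in iroots I, walk r u p & all (fun e => e \in FS) p].

Lemma reachable_step (FS : {set iE I}) e :
  e \in FS -> reachable FS (isrc e) -> reachable FS (idst e).
Proof.
move=> eFS [r [p [rR w pFS]]]; exists r, (rcons p e).
by rewrite all_rcons eFS pFS; split => //; exact: walk_rcons.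
Qed.

End Walks.

Section Costs.
Variable I : inst.
Implicit Types (u v : iV I) (p : seq (iE I)) (F : {set iE I}).

Lemma subset_leq_setcost F F' : F \subset F' -> (setcost F <= setcost F')%N.
Proof.
by move=> sFF'; apply: (sub_le_big (le := leq)) => // [m n|]; [exact: leq_addr | exact/subsetP].
Qed.

Lemma leq_setcostU F F' : (setcost (F :|: F') <= setcost F + setcost F')%N.
Proof.
rewrite /setcost (big_setID F) /= setUK; apply: leq_add => //.
by apply: subset_leq_setcost; rewrite setDUl setDv set0U subsetDl.
Qed.

Lemma leq_setcost_bigcup (J : Type) (r : seq J) (P : pred J) (S : J -> {set iE I}) :
  (setcost (\big[@setU _/set0]_(j <- r | P j) S j) <= \sum_(j <- r | P j) setcost (S j))%N.
Proof.
apply: (big_rec2 (fun X s => setcost X <= s)%N); first by rewrite /setcost big_set0.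
by move=> j X s _ le_Xs; apply: leq_trans (leq_setcostU _ _) _; rewrite leq_add2l.
Qed.

Lemma leq_setcost_seq p : (setcost [set e in p] <= wcost p)%N.
Proof.
elim: p => [|e p IH]; first by rewrite /setcost /wcost big_nil big_pred0 // => x; rewrite inE.
rewrite (_ : [set x in e :: p] = [set e] :|: [set x in p]); last by apply/setP => x; rewrite !inE.
by apply: leq_trans (leq_setcostU _ _) _; rewrite /wcost big_cons /setcost big_set1 leq_add2l.
Qed.

Lemma leq_wcost_uniq p F : uniq p -> all (fun e => e \in F) p -> (wcost p <= setcost F)%N.
Proof.
move=> uniq_p pF; rewrite /wcost big_uniq //.
have -> : (\sum_(e in p) icost e = setcost [set e in p])%N.
  by apply: eq_bigl => e; rewrite inE.
by apply: subset_leq_setcost; apply/subsetP => e; rewrite inE => /(allP pF).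
Qed.

Lemma feasible_walk F t : feasible F -> t \in iterms I ->
  exists r p, [/\ r \in iroots I, walk r t p, all (fun e => e \in F) p
                & (wcost p <= setcost F)%N].
Proof.
move=> HF /HF[r [p [rR w pF]]]; have [p' [w' uniq_p' sub_p']] := walk_shorten w.
have p'F : all (fun e => e \in F) p' by apply/allP => e /sub_p'/(allP pF).
by exists r, p'; split => //; exact: leq_wcost_uniq.
Qed.

Lemma setcost_feasible_gt0 F : (forall e : iE I, 0 < icost e)%N ->
  [disjoint iterms I & iroots I] -> iterms I != set0 -> feasible F -> (0 < setcost F)%N.
Proof.
move=> cost_gt0 XR /set0Pn[t tX] /(_ t tX)[r [[|e p] [rR /= w pF]]].
  by move: rR; rewrite (eqP w) (disjointFr XR tX).
have /andP[eF _] := pF.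
apply: leq_trans (cost_gt0 e) (leq_trans _ (subset_leq_setcost (_ : [set e] \subset F))).
  by rewrite /setcost big_set1.
by rewrite sub1set.
Qed.

Lemma feasible_not_fail F q : (forall e : iE I, 0 < icost e)%N ->
  [disjoint iterms I & iroots I] -> iterms I != set0 ->
  feasible F -> (setcost F)%:R <= q -> ~ fail_cond I q.
Proof.
move=> cost_gt0 XR Xn0 HF Fq; have F_gt0 := setcost_feasible_gt0 cost_gt0 XR Xn0 HF.
case=> [|[t [tX]]]; first by apply/negP; rewrite -leNgt (le_trans _ Fq) // ler1n.
have [r [p [rR w _ cp]]] := feasible_walk HF tX.
by apply; exists r, p; split => //; apply: le_trans Fq; rewrite ler_nat.
Qed.

End Costs.

Section Components.
Variable I : inst.
Implicit Types (W C : {set iV I}).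

Definition comp_of W (t : iV I) := [set v in W | connect (wrel W) t v].

Lemma wrel_sym W : symmetric (wrel W).
Proof.
move=> u v; rewrite /wrel andbCA; congr (_ && (_ && _)).
by apply/existsP/existsP => [][e He]; exists e; rewrite orbC.
Qed.

Lemma comps_mem W C t : C \in comps W -> t \in C -> C = comp_of W t.
Proof.
case/imsetP => u _ ->; rewrite inE => /andP[_ ut].
apply/setP => v; rewrite !inE; apply: andb_id2l => _; apply/idP/idP => [|tv].
  by apply: connect_trans; rewrite (sym_connect_sym (wrel_sym W)).
exact: connect_trans ut tv.
Qed.

Lemma comp_of_comps W t : t \in W -> comp_of W t \in comps W /\ t \in comp_of W t.
Proof. by move=> tW; split; [apply/imsetP; exists t | rewrite inE tW connect0]. Qed.

Lemma comps_sub W C : C \in comps W -> C \subset W.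
Proof. by case/imsetP => u _ ->; apply/subsetP => v; rewrite inE => /andP[]. Qed.

Lemma comps_closed W C a b : C \in comps W -> b \in C -> wrel W b a -> a \in C.
Proof.
move=> HC bC ba; rewrite (comps_mem HC bC) inE (connect1 ba) andbT.
by case/and3P: ba.
Qed.

Lemma comps_eq W C C' t : C \in comps W -> C' \in comps W -> t \in C -> t \in C' -> C = C'.
Proof. by move=> HC HC' tC tC'; rewrite (comps_mem HC tC) (comps_mem HC' tC'). Qed.

Lemma sum_card_relevant W :
  (\sum_(C | relevant W C) #|C :&: iterms I| <= #|iterms I|)%N.
Proof.
under eq_bigr do rewrite -sum1_card.
rewrite -sum1_card; apply: (leq_sum_disjoint (S := id)) => C C' t.
by rewrite /relevant => /andP[HC _] /andP[HC' _]; exact: (comps_eq HC HC').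
Qed.

End Components.

Definition restrict (I : inst) (VT C : {set iV I}) (F : {set iE I}) :
  {set iE (subinst VT C)} := [set e : subE VT C | val e \in F].

Section Subinstance.
Variables (I : inst) (VT C : {set iV I}).
Implicit Types (F : {set iE I}) (S : {set iE (subinst VT C)}).

Lemma card_sub_some (A : {set iV I}) :
  #|[set x : subV C | if x is Some v then val v \in A else false]| = #|C :&: A|.
Proof.
have -> : [set x : subV C | if x is Some v then val v \in A else false]
          = Some @: [set v : {v | v \in C} | val v \in A].
  apply/setP => [[v|]]; rewrite inE; last by apply/esym/imsetP => [[]].
  by rewrite mem_imset ?inE //; exact: Some_inj.
rewrite card_imset; last exact: Some_inj.
rewrite -(card_imset _ val_inj); apply: eq_card => x; rewrite inE.
apply/imsetP/andP => [[v]|[xC xA]]; first by rewrite inE => vA ->; split => //; exact: valP.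
by exists (exist _ x xC); rewrite ?inE.
Qed.

Lemma card_sub_terms : #|iterms (subinst VT C)| = #|C :&: iterms I|.
Proof. exact: card_sub_some. Qed.

Lemma card_sub_roots : #|iroots (subinst VT C)| = (#|C :&: iroots I|).+1.
Proof.
have -> : iroots (subinst VT C) =
    None |: [set x : subV C | if x is Some v then val v \in iroots I else false].
  by apply/setP => [[v|]]; rewrite !inE.
by rewrite cardsU1 inE add1n card_sub_some.
Qed.

Lemma subinst_disjoint : [disjoint iterms I & iroots I] ->
  [disjoint iterms (subinst VT C) & iroots (subinst VT C)].
Proof.
move=> XR; rewrite disjoint_subset; apply/subsetP => [[v|]]; rewrite !inE //=.
by move=> vX; rewrite (disjointFr XR vX).
Qed.

Lemma setcost_lift S : setcost (lift_set S) = setcost S.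
Proof. by rewrite /setcost big_imset //= => x y _ _; exact: val_inj. Qed.

Lemma setcost_restrict F :
  setcost (restrict VT C F) = (\sum_(e in [set e | keep VT C e] :&: F) icost e)%N.
Proof.
rewrite /setcost -(big_imset _ (h := val)) /=; last by move=> x y _ _; exact: val_inj.
apply: eq_bigl => e; apply/imsetP/idP => [[x] | ].
  by rewrite inE => xF ->; rewrite !inE (valP x) xF.
by rewrite !inE => /andP[ke eF]; exists (exist _ e ke); rewrite ?inE.
Qed.

Lemma leq_setcost_restrict F : (setcost (restrict VT C F) <= setcost F)%N.
Proof. by rewrite setcost_restrict; apply: subset_leq_setcost; exact: subsetIr. Qed.

Lemma reachable_lift (FS : {set iE I}) S :
  {in VT, forall u, reachable FS u} -> lift_set S \subset FS ->
  forall p x y, walk (I := subinst VT C) x y p -> all (fun e => e \in S) p ->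
    (if x is Some v then reachable FS (val v) else True) ->
    (if y is Some v then reachable FS (val v) else True).
Proof.
move=> reach_VT SFS; elim=> [|e p IH] x y /=; first by move/eqP => <-.
case/andP=> /eqP src w /andP[eS pS] reach_x; apply: IH w pS _.
have reach_src : reachable FS (isrc (val e)).
  move: src reach_x; case: insubP => [v _ <- <- // | src_nC _ _].
  apply: reach_VT; have /and3P[_ + _] := valP e.
  by rewrite inE (negbTE src_nC).
have := reachable_step (subsetP SFS _ (imset_f val eS)) reach_src.
by case: insubP => // v _ <-.
Qed.

Lemma project_walk (P : {set iV I}) (q : rat) (F : {set iE I}) (t : {v | v \in C}) r :
  C \in comps (P :\: VT) -> (forall v, dist_le (iroots I) v q -> v \in P) ->
  r \in iroots I ->
  forall p a pre, walk r a pre -> walk a (val t) p -> all (fun e => e \in F) p ->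
    (wcost pre + wcost p)%:R <= q ->
    exists x (p' : seq (subE VT C)),
      [/\ walk (I := subinst VT C) x (Some t) p', all (fun e => val e \in F) p'
        & if x is Some v then val v = a else True].
Proof.
(* Induction on the part [p] still to be walked: [pre], already walked, shows
   that the current vertex survived the pruning, so walking backwards from [t]
   we stay in C until the first vertex of T, which becomes r_T. *)
move=> HC HP rR; elim=> [|e p IH] a pre w_pre /=.
  by move=> /eqP -> _ _; exists (Some t), [::]; split => /=.
case/andP=> /eqP src w /andP[eF pF] cost_q.
have w_pre' : walk r (idst e) (rcons pre e) by apply: walk_rcons; rewrite src.
have cost_q' : (wcost (rcons pre e) + wcost p)%:R <= q.
  by move: cost_q; rewrite /wcost -cats1 big_cat big_seq1 big_cons /= -addnA.
have [[v|] [p' [w' p'F v_dst]]] := IH _ _ w_pre' w pF cost_q'; last by exists None, p'.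
have aP : a \in P.
  apply: HP; exists r, pre; split => //; apply: le_trans cost_q.
  by rewrite ler_nat leq_addr.
have dC : idst e \in C by rewrite -v_dst (valP v).
have CW := comps_sub HC.
have w_dst : walk (I := subinst VT C) (insub (idst e)) (Some t) p'.
  by rewrite -v_dst valK.
case: (boolP (a \in VT)) => [aVT | aVT].
  have aC : a \notin C by apply/negP => /(subsetP CW); rewrite !inE aVT.
  have ke : keep VT C e by rewrite /keep !inE dC src aVT !orbT.
  by exists None, (exist _ e ke :: p'); split; rewrite //= ?eF // src insubN.
have aW : a \in P :\: VT by rewrite !inE aVT aP.
have aC : a \in C.
  apply: (comps_closed HC dC); rewrite /wrel aW (subsetP CW _ dC) /=.
  by apply/existsP; exists e; rewrite src !eqxx orbT.
have ke : keep VT C e by rewrite /keep !inE dC src aC.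
exists (Some (exist _ a aC)), (exist _ e ke :: p'); split; rewrite //= ?eF //.
by rewrite src (insubT (fun v => v \in C) aC) eqxx.
Qed.

Lemma restrict_feasible (P : {set iV I}) (q : rat) (F : {set iE I}) :
  C \in comps (P :\: VT) -> (forall v, dist_le (iroots I) v q -> v \in P) ->
  feasible F -> (setcost F)%:R <= q -> feasible (restrict VT C F).
Proof.
move=> HC HP HF Fq [t|]; rewrite inE //= => tX.
have [r [p [rR w pF cp]]] := feasible_walk HF tX.
have cost_q : (wcost (I := I) [::] + wcost p)%:R <= q.
  by rewrite /wcost big_nil add0n; apply: le_trans Fq; rewrite ler_nat.
have [x [p' [w' p'F val_x]]] := project_walk HC HP rR (eqxx r : walk r r [::]) w pF cost_q.
exists x, p'; split => //; first by rewrite inE; case: x val_x {w'} => [v /= ->|].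
by apply/allP => e /(allP p'F); rewrite inE.
Qed.

End Subinstance.

Section Cheaper.
Variable I : inst.
Implicit Types (a b r : option {set iE I}) (x y : {set iE I}).

Lemma cheaper_cases a b r : cheaper a b r -> r = a \/ r = b.
Proof.
case: a b => [x|] [y|] /=; try by move=> ->; auto.
by case=> [[-> _]|[-> _]]; auto.
Qed.

Lemma cheaper_le_left x b r :
  cheaper (Some x) b r -> exists2 z, r = Some z & (setcost z <= setcost x)%N.
Proof.
case: b => [y|] /=; last by move=> ->; exists x.
by case=> [[-> _]|[-> le_yx]]; [exists x | exists y].
Qed.

Lemma cheaper_le_right a y r :
  cheaper a (Some y) r -> exists2 z, r = Some z & (setcost z <= setcost y)%N.
Proof.
case: a => [x|] /=; last by move=> ->; exists y.
by case=> [[-> le_xy]|[-> _]]; [exists x | exists y].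
Qed.

End Cheaper.

Section Separator.
Variables (I : inst) (q : rat) (P : {set iV I}) (A : iV I -> {set iE I})
  (Tj : iV I -> option {set iE I}) (F : {set iE I}).
Hypotheses (HP : forall v, v \in P <-> dist_le (iroots I) v q)
  (HA : spt_family P A) (HT : valid_T A Tj F).
Local Notation VT := (tvert Tj).
Local Notation W := (P :\: tvert Tj).

Lemma tvert_reachable (FS : {set iE I}) :
  tedges Tj \subset FS -> {in VT, forall u, reachable FS u}.
Proof.
case: HT => _ Tj_paths _ _ _ TFS u /bigcupP[r rR].
case Tjr: (Tj r) => [S|]; last by rewrite inE.
have SFS : S \subset FS.
  by apply: subset_trans TFS; apply/subsetP => e eS; apply/bigcupP; exists r; rewrite ?Tjr.
have [ps [_ ps_walks S_ps]] := Tj_paths r S Tjr.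
have reach_edge e : e \in S ->
    exists2 p, walk r (isrc e) p & all (fun e => e \in FS) (rcons p e).
  rewrite S_ps in_bigcup_seq => /hasP[p pps]; rewrite inE => ep.
  have [v /andP[w _]] := ps_walks p pps; have [p1 w1 sub_p1] := walk_prefix w ep.
  exists p1 => //; apply/allP => x /sub_p1 xp; apply: (subsetP SFS).
  by rewrite S_ps in_bigcup_seq; apply/hasP; exists p; rewrite ?inE.
rewrite !inE => /orP[/eqP -> | /orP[] /imsetP[e /reach_edge[p w pFS] ->]].
- by exists r, [::]; split => /=.
- by exists r, p; move: pFS; rewrite all_rcons => /andP[_ pFS].
- by exists r, (rcons p e); split => //; exact: walk_rcons.
Qed.

Lemma split_feasible (sol : forall C, option {set iE (subinst VT C)}) :
  ~ fail_cond I q ->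
  (forall C S, relevant W C -> sol C = Some S -> feasible S) ->
  [forall C, relevant W C ==> isSome (sol C)] ->
  feasible (tedges Tj :|: \bigcup_(C | relevant W C) lift_set (odflt set0 (sol C))).
Proof.
move=> not_fail sol_feasible /forallP sol_some.
set FS := _ :|: _.
have reach_VT : {in VT, forall u, reachable FS u} by apply: tvert_reachable; exact: subsetUl.
move=> t tX; case: (boolP (t \in VT)) => [tVT | tnVT]; first exact: reach_VT.
have tW : t \in W.
  rewrite !inE tnVT /=; apply/HP; apply: NNPP => t_far.
  by apply: not_fail; right; exists t.
have [HC tC] := comp_of_comps tW; move: (comp_of W t) HC tC => C HC tC.
have rel_C : relevant W C by rewrite /relevant HC; apply/set0Pn; exists t; rewrite inE tC.
have [S E] : exists S, sol C = Some S.
  by move: (sol_some C) => /implyP/(_ rel_C); case: (sol C) => // S _; exists S.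
have SFS : lift_set S \subset FS.
  by apply: subsetU; apply/orP; right; apply: (bigcup_max C); rewrite ?E.
have /(sol_feasible C S rel_C E)[[v|] [p [+ w pS]]] :
  Some (exist _ t tC) \in iterms (subinst VT C) by rewrite inE.
all: rewrite inE => root_x; apply: (reachable_lift reach_VT SFS w pS) => //=.
by exists (val v), [::]; split => //; exact: eqxx.
Qed.

Lemma wcost_spt_path (c : nat) r v p : q < 2 * c%:R ->
  r \in iroots I -> walk r v p -> all (fun e => e \in A r) p -> (wcost p <= 2 * c)%N.
Proof.
move=> q_lt rR w pA; case: HA => _ A_P _ A_dist _.
have d_v := A_dist r v p rR w pA.
case: (walk_target w) => [vr | [e ep ev]].
  by have := d_v.2 r [::] rR; rewrite vr /= eqxx /wcost big_nil leqn0 => /(_ isT)/eqP ->.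
have /HP v_near : v \in P by rewrite -ev; case: (A_P r e (allP pA e ep)).
rewrite ltnW // -(ltr_nat rat) natrM.
exact: le_lt_trans (is_dist_le d_v v_near) q_lt.
Qed.

Lemma setcost_Tj (c : nat) r S : q < 2 * c%:R ->
  r \in iroots I -> Tj r = Some S -> (setcost S <= 8 * c)%N.
Proof.
move=> q_lt rR Tjr; case: HT => _ Tj_paths _ _ _.
have [ps [size_ps ps_walks ->]] := Tj_paths r S Tjr.
apply: leq_trans (leq_setcost_bigcup _ _ _) _.
apply: (@leq_trans (\sum_(p <- ps) wcost p)%N).
  by apply: leq_sum => p _; exact: leq_setcost_seq.
have path_cost p : p \in ps -> (wcost p <= 2 * c)%N.
  by move=> /ps_walks[v /andP[w pA]]; exact: wcost_spt_path q_lt rR w pA.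
apply: leq_trans (leq_sum_seq_bound path_cost) _.
by rewrite mulnA leq_mul2r; apply/orP; right; exact: (leq_mul size_ps (leqnn 2)).
Qed.

Lemma setcost_tedges (c : nat) : q < 2 * c%:R ->
  (setcost (tedges Tj) <= #|iroots I :&: VT| * (8 * c))%N.
Proof.
move=> q_lt; apply: (@leq_trans (\sum_(r in iroots I) (r \in VT) * (8 * c))%N).
  apply: leq_trans (leq_setcost_bigcup _ _ _) _; apply: leq_sum => r rR.
  case Tjr: (Tj r) => [S|] /=; last by rewrite /setcost big_set0.
  have -> : r \in VT by apply/bigcupP; exists r; rewrite // Tjr !inE eqxx.
  by rewrite mul1n; exact: setcost_Tj q_lt rR Tjr.
rewrite -big_distrl /= leq_mul2r sum_bool_card; apply/orP; right.
by apply: subset_leq_card; apply/subsetP => r; rewrite !inE.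
Qed.

Lemma card_roots_comp C : C \in comps W ->
  (#|C :&: iroots I| + #|iroots I :&: VT| <= #|iroots I|)%N.
Proof.
move=> HC; rewrite -cardsUI.
have -> : (C :&: iroots I) :&: (iroots I :&: VT) = set0.
  apply/setP => x; rewrite !inE; case xC: (x \in C) => //=.
  have := subsetP (comps_sub HC) _ xC; rewrite !inE => /andP[/negbTE -> _].
  by rewrite !andbF.
by rewrite cards0 addn0 subset_leq_card // subUset subsetIr subsetIl.
Qed.

Lemma sum_setcost_restrict (Fo : {set iE I}) :
  (\sum_(C | relevant W C) setcost (restrict VT C Fo) <= setcost Fo)%N.
Proof.
under eq_bigr do rewrite setcost_restrict.
apply: (leq_sum_disjoint (S := fun C => [set e | keep VT C e])) => C C' e.
rewrite /relevant !inE => /andP[HC _] /andP[HC' _].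
have outside_VT D x : D \in comps W -> x \in D -> x \notin VT.
  by move=> HD /(subsetP (comps_sub HD)); rewrite !inE => /andP[].
case/and3P=> /orP[sC|dC] s_in d_in /and3P[/orP[sC'|dC'] s_in' d_in'].
- exact: (comps_eq HC HC' sC sC').
- move: d_in; rewrite !inE (negbTE (outside_VT _ _ HC' dC')) orbF => dC.
  exact: (comps_eq HC HC' dC dC').
- move: s_in; rewrite !inE (negbTE (outside_VT _ _ HC' sC')) orbF => sC.
  exact: (comps_eq HC HC' sC sC').
- exact: (comps_eq HC HC' dC dC').
Qed.

Lemma split_cost l (Fo : {set iE I}) (sol : forall C, option {set iE (subinst VT C)}) :
  q < 2 * (setcost Fo)%:R ->
  (forall C, relevant W C -> exists2 S, sol C = Some S &
     (setcost S <= (8 * (#|iroots (subinst VT C)| + l) + 1)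
                   * setcost (restrict VT C Fo))%N) ->
  (setcost (tedges Tj :|: \bigcup_(C | relevant W C) lift_set (odflt set0 (sol C)))
     <= (8 * (#|iroots I| + l.+1) + 1) * setcost Fo)%N.
Proof.
move=> q_lt sol_cost.
set k := #|iroots I :&: VT|; set R := #|iroots I|; set K := (8 * (R - k + l.+1) + 1)%N.
have kR : (k <= R)%N by apply/subset_leq_card/subsetIl.
have comp_cost C : relevant W C ->
    (setcost (lift_set (odflt set0 (sol C))) <= K * setcost (restrict VT C Fo))%N.
  move=> rel_C; have [S -> le_S] := sol_cost C rel_C; rewrite setcost_lift /=.
  apply: leq_trans le_S _; rewrite leq_mul2r; apply/orP; right.
  have := card_roots_comp (andP rel_C).1; rewrite card_sub_roots /K; lia.
have union_cost :
    (setcost (\bigcup_(C | relevant W C) lift_set (odflt set0 (sol C))) <= K * setcost Fo)%N.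
  apply: (@leq_trans (\sum_(C | relevant W C) K * setcost (restrict VT C Fo))%N).
    by apply: leq_trans (leq_setcost_bigcup _ _ _) _; apply: leq_sum.
  by rewrite -big_distrr leq_mul2l sum_setcost_restrict orbT.
apply: leq_trans (leq_setcostU _ _) _.
apply: leq_trans (leq_add (setcost_tedges q_lt) union_cost) _.
by rewrite /K mulnA -mulnDl leq_mul2r; apply/orP; right; lia.
Qed.

End Separator.

Lemma run_calls_lt1 I q res c : DST_run I q res c -> q < 1 -> c = 1%N.
Proof.
case=> [// | I' q' t r p not_fail | I' q' r1 n1 P A Tj F sol cnt res' not_fail] *;
  by case: not_fail; left.
Qed.

Lemma run_feasible I q res c : DST_run I q res c -> forall S, res = Some S -> feasible S.
Proof.
elim=> {I q res c} [// | I q t r p _ X_t rR w _ | I q r1 n1 P A Tj F sol cnt res].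
  move=> _ [<-] t'; rewrite X_t inE => /eqP ->.
  by exists r, p; split => //; apply/allP => e; rewrite inE.
move=> not_fail _ _ IH1 HP _ HT _ _ _ IHs choice S.
case: (cheaper_cases choice) => ->; first exact: IH1.
case: ifP => // sol_some [<-].
by apply: (split_feasible (sol := sol) HP HT not_fail _ sol_some) => C S' rel_C; exact: IHs.
Qed.

Lemma run_cost I q res c : DST_run I q res c ->
  forall l (Fo : {set iE I}), (forall e : iE I, 0 < icost e)%N ->
  [disjoint iterms I & iroots I] -> iterms I != set0 -> (#|iterms I| <= 2 ^ l)%N ->
  feasible Fo -> (setcost Fo)%:R <= q ->
  exists2 S, res = Some S & (setcost S <= (8 * (#|iroots I| + l) + 1) * setcost Fo)%N.
Proof.
elim=> {I q res c} [I q fail | I q t r p _ X_t rR w d_t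
  | I q r1 n1 P A Tj F sol cnt res not_fail X_n1 _ IH1 HP HA HT _ half _ IHs choice]
  l Fo cost_gt0 XR X_n0 X_l HFo Fo_q.
- by case: (feasible_not_fail cost_gt0 XR X_n0 HFo Fo_q).
- exists [set e in p] => //.
  have tX : t \in iterms I by rewrite X_t inE.
  have [r' [p' [r'R w' _ cp]]] := feasible_walk HFo tX.
  apply: leq_trans (leq_setcost_seq p) (leq_trans (d_t.2 _ _ r'R w') (leq_trans cp _)).
  by rewrite leq_pmull // addn1.
case: (ltrP q (2 * (setcost Fo)%:R)) => q_lt; last first.
  have Fo_q2 : (setcost Fo)%:R <= q / 2 by lra.
  have [S1 r1_S1 le_S1] := IH1 l Fo cost_gt0 XR X_n0 X_l HFo Fo_q2.
  rewrite r1_S1 in choice; have [z -> le_z] := cheaper_le_left choice.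
  by exists z => //; exact: leq_trans le_z le_S1.
have [l' El] := card_le_pow2_succ X_n0 X_n1 X_l; subst l.
have sub_cost C : relevant (P :\: tvert Tj) C -> exists2 S, sol C = Some S &
    (setcost S <= (8 * (#|iroots (subinst (tvert Tj) C)| + l') + 1)
                  * setcost (restrict (tvert Tj) C Fo))%N.
  move=> rel_C; have /andP[HC C_X] := rel_C.
  have sub_Fo_q : (setcost (restrict (tvert Tj) C Fo))%:R <= q.
    by apply: le_trans Fo_q; rewrite ler_nat leq_setcost_restrict.
  apply: (IHs C rel_C l' _ _ (subinst_disjoint _ _ XR) _ _ _ sub_Fo_q).
  - by move=> e; exact: cost_gt0.
  - by rewrite -card_gt0 card_sub_terms card_gt0.
  - by rewrite card_sub_terms; exact: leq_half_pow2 (half C HC) X_l.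
  - by apply: (restrict_feasible HC _ HFo Fo_q) => v /HP.
have sol_some : [forall C, relevant (P :\: tvert Tj) C ==> isSome (sol C)].
  by apply/forallP => C; apply/implyP => /sub_cost[S -> _].
rewrite sol_some in choice; have [z -> le_z] := cheaper_le_right choice.
by exists z => //; exact: leq_trans le_z (split_cost HP HA HT q_lt sub_cost).
Qed.

Lemma run_calls I q res c : DST_run I q res c -> forall l o,
  iterms I != set0 -> (#|iterms I| <= 2 ^ l)%N -> q <= (2 ^ o)%:R ->
  (c <= #|iterms I| * 2 ^ (2 * l + o))%N.
Proof.
elim=> {I q res c} [I q _ | I q t r p _ _ _ _ _
  | I q r1 n1 P A Tj F sol cnt res _ X_n1 run1 IH1 _ _ _ _ half _ IHs _] l o X_n0 X_l q_o;
  try by rewrite muln_gt0 card_gt0 X_n0 expn_gt0.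
have [l' El] := card_le_pow2_succ X_n0 X_n1 X_l; subst l.
set n := #|iterms I|; set B := (2 ^ (2 * l' + o))%N.
have nB_gt0 : (0 < n * B)%N by rewrite muln_gt0 card_gt0 X_n0 expn_gt0.
have first_calls : (n1 <= 2 * (n * B))%N.
  case: o q_o @B nB_gt0 => [|o] q_o B nB_gt0.
    rewrite (run_calls_lt1 run1) ?(leq_trans nB_gt0) ?leq_pmull //.
    by rewrite expn0 in q_o; lra.
  apply: leq_trans (IH1 l'.+1 o X_n0 X_l _) _; first by rewrite expnS natrM in q_o; lra.
  by rewrite /B mulnCA -expnS; apply: eq_leq; congr (_ * 2 ^ _)%N; lia.
have comp_calls : (\sum_(C | relevant (P :\: tvert Tj) C) cnt C <= n * B)%N.
  apply: (@leq_trans (\sum_(C | relevant (P :\: tvert Tj) C) #|C :&: iterms I| * B)%N).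
    apply: leq_sum => C rel_C; have /andP[HC C_X] := rel_C.
    rewrite -(card_sub_terms (tvert Tj)).
    apply: (IHs C rel_C l' o _ _ q_o); first by rewrite -card_gt0 card_sub_terms card_gt0.
    by rewrite card_sub_terms; exact: leq_half_pow2 (half C HC) X_l.
  by rewrite -big_distrl leq_mul2r sum_card_relevant orbT.
rewrite (_ : (2 * l'.+1 + o = (2 * l' + o).+2)%N); last by lia.
by rewrite !expnS -/B; nia.
Qed.

Unset Implicit Arguments.

(* Planarity is what makes the separator T of step (3) exist; an execution
   [DST_run] already comes with it. *)
Theorem lemma6 (I : inst) (l o : nat) (q : rat) (optv : nat)
    (res : option {set iE I}) (calls : nat) :
  planar I ->
  (forall e : iE I, 0 < icost e)%N ->
  [disjoint iterms I & iroots I] ->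
  iterms I != set0 ->
  (#|iterms I| <= 2 ^ l)%N ->
  q <= (2 ^ o)%:R ->
  is_opt I optv ->
  optv%:R <= q ->
  DST_run I q res calls ->
  exists F : {set iE I},
    [/\ res = Some F, feasible F,
        (setcost F <= (8 * (#|iroots I| + l) + 1) * optv)%N
      & (calls <= #|iterms I| * 2 ^ (2 * l + o))%N].
Proof.
move=> _ cost_gt0 XR X_n0 X_l q_o [[Fo [HFo <-]] _] Fo_q run.
have [S res_S cost_S] := run_cost run cost_gt0 XR X_n0 X_l HFo Fo_q.
exists S; split => //; first exact: run_feasible run S res_S.
exact: run_calls run l o X_n0 X_l q_o.
Qed.
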